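(* Let $\mathcal X$ be a Palais–Smale GKM variety, with its moment graph directed as in the Palais–Smale condition. If $p^v=(p^v_w)_{w\in\mathcal X^T}$ and $q^v=(q^v_w)_{w\in\mathcal X^T}$ are two Knutson–Tao classes corresponding to the same fixed point $v$, then $p^v_w=q^v_w$ for every $w\in\mathcal X^T$.
   Context: Let $T=(\mathbb{C}^* )^n$ and let $\mathcal X$ be a complex projective algebraic variety with an algebraic $T$-action having finitely many fixed points and finitely many one-dimensional orbits, and which is equivariantly formal (a GKM variety). The moment graph has vertex set $\mathcal X^T$ and an edge for each one-dimensional orbit, joining the two fixed points in its closure. When directed, each edge $v\to w$ is labeled $\alpha_{vw}$, the $T$-weight (a linear form in $t_1,\ldots,t_n$) on the tangent line at $v$ of the corresponding orbit closure. Assume that the labels on the edges directed out of any vertex are pairwise linearly independent. $\mathcal X$ is Palais–Smale if the moment graph can be directed so that there is an edge $v\to u$ only if $v$ has more outgoing edges than $u$. By the GKM theorem, $H^*_T(\mathcal X)$ is the ring of tuples $(p_w)_{w\in\mathcal X^T}$ of polynomials in $\mathbb{C}[t_1,\ldots,t_n]$ with $p_{N}-p_{S}\in\langle\alpha\rangle$ for every edge with endpoints $N,S$ and weight $\pm\alpha$. Write $u\succeq_D u'$ if there is a directed path (possibly of length $0$) from $u$ to $u'$. A Knutson–Tao class for $v$ is a class $(p^v_w)_w\in H^*_T(\mathcal X)$ with: (1) $p^v_v=\prod_{v\to w}\alpha_{vw}$, the product over the edges out of $v$; (2) each nonzero $p^v_w$ is homogeneous of degree $\deg p^v_v$; (3)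 $p^v_w=0$ whenever $w\not\succ_D v$. *)

From HB Require Import structures.
From mathcomp Require Import all_boot all_order all_algebra.
From mathcomp Require Import mpoly.
From mathcomp Require Import Rstruct.
From mathcomp Require Import complex.
From Stdlib Require Reals.

Set Implicit Arguments.
Unset Strict Implicit.
Unset Printing Implicit Defensive.

Import Order.TTheory GRing.Theory Num.Theory.
Local Open Scope ring_scope.

Definition CC : Type := complex Rdefinitions.R.

(* H^*_T(pt) = C[t_1, ..., t_n]. *)
Definition Tpoly (n : nat) := {mpoly CC[n]}.

(* Moment graph data: finite vertex set V (the fixed points X^T), finite edge
   set E (one-dimensional orbits), each edge directed src e -> tgt e (the
   Palais-Smale orientation) and labelled alpha e = alpha_{src e, tgt e}, the
   T-weight at src e on the tangent line of the orbit closure. *)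

Definition outdeg (V E : finType) (src : E -> V) (v : V) : nat :=
  #|[set e | src e == v]|.

Definition palais_smale (V E : finType) (src tgt : E -> V) : Prop :=
  forall e : E, (outdeg src (tgt e) < outdeg src (src e))%N.

Definition weight_labels (n : nat) (E : finType) (alpha : E -> Tpoly n) : Prop :=
  forall e : E, alpha e != 0 /\ alpha e \is 1.-homog.

Definition pairwise_indep_out (n : nat) (V E : finType) (src : E -> V)
  (alpha : E -> Tpoly n) : Prop :=
  forall e e' : E, e != e' -> src e = src e' ->
    forall a b : CC, a *: alpha e + b *: alpha e' = 0 -> a = 0 /\ b = 0.

(* GKM description of H^*_T(X): tuples (p_w)_w with p_N - p_S in <alpha>
   for every edge with endpoints N, S and weight +-alpha. *)
Definition is_gkm_class (n : nat) (V E : finType) (src tgt : E -> V)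
  (alpha : E -> Tpoly n) (p : V -> Tpoly n) : Prop :=
  forall e : E, exists c : Tpoly n, p (src e) - p (tgt e) = c * alpha e.

Definition dedge (V E : finType) (src tgt : E -> V) : rel V :=
  fun x y => [exists e : E, (src e == x) && (tgt e == y)].

Definition dreach (V E : finType) (src tgt : E -> V) (u u' : V) : bool :=
  connect (dedge src tgt) u u'.

Definition tdeg (n : nat) (p : Tpoly n) : nat := (msize p).-1.

Definition knutson_tao_class (n : nat) (V E : finType) (src tgt : E -> V)
  (alpha : E -> Tpoly n) (v : V) (p : V -> Tpoly n) : Prop :=
  [/\ is_gkm_class src tgt alpha p,
      p v = \prod_(e | src e == v) alpha e,
      (forall w : V, p w != 0 -> p w \is (tdeg (p v)).-homog) &
      (forall w : V, ~~ dreach src tgt w v -> p w = 0)].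

(** The difference [r] of two Knutson-Tao classes for [v] vanishes at [v] and at every
    [w] not above [v], and is homogeneous of degree [outdeg v].  Induct on [outdeg w]:
    for [w <> v] above [v], Palais-Smale gives [outdeg u < outdeg w] for every edge
    [w -> u], so [r u = 0] and the GKM condition makes each of the [outdeg w] labels
    out of [w] divide [r w].  These are pairwise non-proportional linear forms, hence
    pairwise non-associate primes of [C[t]], so their product, of degree [outdeg w],
    divides [r w]; as [w] reaches [v], [outdeg v < outdeg w], which forces [r w = 0]. *)
From HB Require Import structures.
From mathcomp Require Import all_boot all_order all_algebra.
From mathcomp Require Import mpoly.
From mathcomp Require Import ring complex Rstruct.

Set Implicit Arguments.
Unset Strict Implicit.
Unset Printing Implicit Defensive.

Import Order.TTheory GRing.Theory Num.Theory.
Local Open Scope ring_scope.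

Section Divisibility.
Variables (R : fieldType) (n : nat).
Local Notation P := {mpoly R[n]}.
Implicit Types (l x y a b c d f g h : P).

Definition dvdm l x := exists c, x = c * l.

Lemma dvdm0 l : dvdm l 0.
Proof. by exists 0; rewrite mul0r. Qed.

Lemma dvdmD l x y : dvdm l x -> dvdm l y -> dvdm l (x + y).
Proof. by move=> [a ->] [b ->]; exists (a + b); rewrite mulrDl. Qed.

Lemma dvdmN l x : dvdm l x -> dvdm l (- x).
Proof. by move=> [a ->]; exists (- a); rewrite mulNr. Qed.

Lemma dvdm_mull l x y : dvdm l y -> dvdm l (x * y).
Proof. by move=> [a ->]; exists (x * a); rewrite mulrA. Qed.

Lemma dvdmZ l (k : R) x : dvdm l x -> dvdm l (k *: x).
Proof. by move=> [a ->]; exists (k *: a); rewrite scalerAl. Qed.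

Lemma dvdm_subM l a b c d :
  dvdm l (a - b) -> dvdm l (c - d) -> dvdm l (a * c - b * d).
Proof.
move=> lab lcd; have -> : a * c - b * d = c * (a - b) + b * (c - d) by ring.
by apply: dvdmD; apply: dvdm_mull.
Qed.

Lemma dvdm_subB l a b c d :
  dvdm l (a - b) -> dvdm l (c - d) -> dvdm l ((a - c) - (b - d)).
Proof.
move=> lab lcd; have -> : a - c - (b - d) = (a - b) - (c - d) by ring.
by apply: dvdmD => //; apply: dvdmN.
Qed.

Lemma dvdm_subX l a b k : dvdm l (a - b) -> dvdm l (a ^+ k - b ^+ k).
Proof.
move=> lab; elim: k => [|k IHk]; first by rewrite !expr0 subrr; apply: dvdm0.
by rewrite !exprS; apply: dvdm_subM.
Qed.

Lemma dvdm_sub_prod l (I : Type) (r : seq I) (F G : I -> P) :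
  (forall i, dvdm l (F i - G i)) ->
  dvdm l (\prod_(i <- r) F i - \prod_(i <- r) G i).
Proof.
move=> lFG; apply: (big_rec2 (fun x y => dvdm l (x - y))).
  by rewrite subrr; apply: dvdm0.
by move=> i x y _; apply: dvdm_subM.
Qed.

Lemma dvdm_sub_comp l (s : n.-tuple P) :
  (forall i, dvdm l (tnth s i - 'X_i)) -> forall f, dvdm l (f - (f \mPo s)).
Proof.
move=> ls f; rewrite comp_mpolyEX {1}(mpolyE f) -sumrB.
apply: (big_rec (dvdm l)) => [|m x _ lx]; first exact: dvdm0.
apply: dvdmD => //; rewrite -scalerBr; apply: dvdmZ.
rewrite comp_mpolyX mpolyXE_id; apply: dvdm_sub_prod => i.
by apply: dvdm_subX; rewrite -opprB; apply: dvdmN.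
Qed.

Lemma msize_dhomog f k : f != 0 -> f \is k.-homog -> msize f = k.+1.
Proof.
move=> f_neq0 f_homog.
rewrite (dhomog_uniq f_neq0 f_homog (dhomog_msize f_homog)) prednK //.
by rewrite lt0n msize_poly_eq0.
Qed.

Lemma msupp_linear l m : l \is 1.-homog -> m \in msupp l -> exists i, m = U_(i)%MM.
Proof. by move=> /dhomogP l1 /l1 /eqP /mdeg1P [i /eqP ->]; exists i. Qed.

(* If the coefficient [a] of [t_j] in [l] is nonzero, [t_j |-> t_j - l / a] kills [l]
   and fixes every [t_i] modulo [l]. *)
Lemma linear_annihilating_subst l : l != 0 -> l \is 1.-homog ->
  exists2 s : n.-tuple P, forall i, dvdm l (tnth s i - 'X_i) & l \mPo s = 0.
Proof.
move=> l_neq0 l_lin.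
have [m0 m0_supp] : exists m, m \in msupp l.
  case: (msupp l) (msupp_eq0 l) => [|m ?]; last by exists m; rewrite mem_head.
  by rewrite eqxx (negbTE l_neq0).
have [j m0E] := msupp_linear l_lin m0_supp; rewrite {}m0E in m0_supp.
set a := l@_U_(j)%MM.
have a_neq0 : a != 0 by rewrite -mcoeff_msupp.
exists [tuple 'X_i - (if i == j then a^-1 *: l else 0) | i < n].
  move=> i; rewrite tnth_mktuple addrAC subrr add0r; apply: dvdmN.
  by case: (i == j); [exists a^-1%:MP; rewrite mul_mpolyC | apply: dvdm0].
rewrite comp_mpolyEX (eq_big_seq (fun m =>
    l@_m *: 'X_[m] - (l@_m * (m == U_(j)%MM)%:R / a) *: l)); last first.
  move=> m /(msupp_linear l_lin) [i ->].
  rewrite comp_mpolyXU -tnth_nth tnth_mktuple scalerBr eq_mnm1.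
  by case: (i == j); rewrite ?mulr1 ?scalerA ?mulr0 ?mul0r ?scale0r ?scaler0.
rewrite sumrB -mpolyE -scaler_suml -big_distrl /=.
rewrite (bigD1_seq U_(j)%MM) ?msupp_uniq //= eqxx mulr1 big1 ?addr0.
  by rewrite divff // scale1r subrr.
by move=> m /negbTE ->; rewrite mulr0.
Qed.

Lemma linear_dvdmM l g h : l != 0 -> l \is 1.-homog ->
  dvdm l (g * h) -> dvdm l g \/ dvdm l h.
Proof.
move=> l_neq0 l_lin [c ghE]; have [s ls ls0] := linear_annihilating_subst l_neq0 l_lin.
have /eqP : (g \mPo s) * (h \mPo s) = 0 by rewrite -rmorphM /= ghE rmorphM /= ls0 mulr0.
rewrite mulf_eq0 => /orP[] /eqP gs0; [left | right].
  by have := dvdm_sub_comp ls g; rewrite gs0 subr0.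
by have := dvdm_sub_comp ls h; rewrite gs0 subr0.
Qed.

Lemma dvdm_linear_scale l l' : l != 0 -> l \is 1.-homog ->
  l' != 0 -> l' \is 1.-homog -> dvdm l l' -> exists k : R, l' = k *: l.
Proof.
move=> l_neq0 l_lin l'_neq0 l'_lin [c l'E].
have c_neq0 : c != 0 by apply: contraNneq l'_neq0 => c0; rewrite l'E c0 mul0r.
have := msizeM c_neq0 l_neq0.
rewrite -l'E (msize_dhomog l_neq0 l_lin) (msize_dhomog l'_neq0 l'_lin) addn2 /=.
move=> /eqP; rewrite eqSS => /eqP c1.
by exists c@_0; rewrite l'E {1}(msize1_polyC (eq_leq (esym c1))) mul_mpolyC.
Qed.

End Divisibility.

Section ProductsOfLinearForms.
Variables (R : fieldType) (n : nat) (I : eqType) (alpha : I -> {mpoly R[n]}).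
Hypothesis alpha_linear : forall i, alpha i != 0 /\ alpha i \is 1.-homog.

Lemma big_prod_linear_dhomog (r : seq I) :
  \prod_(i <- r) alpha i != 0 /\ \prod_(i <- r) alpha i \is (size r).-homog.
Proof.
elim: r => [|i r [IHr0 IHr]]; first by rewrite big_nil oner_eq0 dhomog1.
have [i_neq0 i_lin] := alpha_linear i.
by rewrite big_cons mulf_neq0 //; split => //; exact: dhomogM i_lin IHr.
Qed.

Lemma dvdm_mul_big_prod_cancel j x (r : seq I) :
  (forall i, i \in r -> ~ dvdm (alpha j) (alpha i)) ->
  dvdm (alpha j) (x * \prod_(i <- r) alpha i) -> dvdm (alpha j) x.
Proof.
have [j_neq0 j_lin] := alpha_linear j.
elim: r x => [|i r IHr] x r_ndvd; first by rewrite big_nil mulr1.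
rewrite big_cons mulrA => /(IHr _ (fun k kr => r_ndvd k (mem_behead (s := i :: r) kr))).
by case/(linear_dvdmM j_neq0 j_lin) => // /(r_ndvd i (mem_head i r)).
Qed.

Lemma dvdm_big_prod (r : seq I) f : uniq r ->
  {in r &, forall i j, i != j -> ~ dvdm (alpha i) (alpha j)} ->
  (forall i, i \in r -> dvdm (alpha i) f) -> dvdm (\prod_(i <- r) alpha i) f.
Proof.
elim: r => [|i r IHr] /=; first by exists f; rewrite big_nil mulr1.
move=> /andP[i_notin_r r_uniq] r_ndvd r_dvd.
have r_sub : {subset r <= i :: r} := mem_behead (s := i :: r).
have [c fE] := IHr r_uniq (sub_in2 r_sub r_ndvd) (fun k kr => r_dvd k (r_sub k kr)).
have [c' cE] : dvdm (alpha i) c.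
  apply: (dvdm_mul_big_prod_cancel (r := r)); last by rewrite -fE; apply: r_dvd; rewrite mem_head.
  move=> k kr; apply: r_ndvd; rewrite ?mem_head ?r_sub //.
  by apply: contraNneq i_notin_r => ->.
by exists c'; rewrite big_cons fE cE mulrA.
Qed.

Lemma size_le_dhomog_dvdm (r : seq I) f d : uniq r ->
  {in r &, forall i j, i != j -> ~ dvdm (alpha i) (alpha j)} ->
  (forall i, i \in r -> dvdm (alpha i) f) -> f != 0 -> f \is d.-homog ->
  (size r <= d)%N.
Proof.
move=> r_uniq r_ndvd r_dvd f_neq0 f_homog.
have [c fE] := dvdm_big_prod r_uniq r_ndvd r_dvd.
have [pr_neq0 pr_homog] := big_prod_linear_dhomog r.
have c_neq0 : c != 0 by apply: contraNneq f_neq0 => c0; rewrite fE c0 mul0r.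
have := msizeM c_neq0 pr_neq0.
rewrite -fE (msize_dhomog f_neq0 f_homog) (msize_dhomog pr_neq0 pr_homog).
have : (0 < msize c)%N by rewrite lt0n msize_poly_eq0.
rewrite addnS /= => c_pos dE.
by rewrite -ltnS dE -{1}[size r]add0n ltn_add2r.
Qed.

End ProductsOfLinearForms.

Section MomentGraph.
Variables (V E : finType) (src tgt : E -> V).
Hypothesis src_tgt_outdeg : palais_smale src tgt.

Lemma dreach_outdeg u w : dreach src tgt u w -> (outdeg src w <= outdeg src u)%N.
Proof.
move=> /connectP[s]; elim: s u => [|x s IHs] u /=; first by move=> _ ->.
move=> /andP[/existsP[e /andP[/eqP <- /eqP <-]] e_path] w_last.
exact: leq_trans (IHs _ e_path w_last) (ltnW (src_tgt_outdeg e)).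
Qed.

Lemma dreach_first_edge u w : dreach src tgt u w -> u != w ->
  exists2 e, src e = u & dreach src tgt (tgt e) w.
Proof.
move=> /connectP[[|x s] /=]; first by move=> _ ->; rewrite eqxx.
move=> /andP[/existsP[e /andP[/eqP <- /eqP xE]] e_path] w_last _.
by exists e => //; apply/connectP; exists s; rewrite xE.
Qed.

End MomentGraph.

Section GKMClasses.
Variables (n : nat) (V E : finType) (src tgt : E -> V) (alpha : E -> Tpoly n).
Hypothesis alpha_weight : weight_labels alpha.
Hypothesis alpha_indep : pairwise_indep_out src alpha.
Hypothesis src_tgt_outdeg : palais_smale src tgt.

Lemma is_gkm_classB p q : is_gkm_class src tgt alpha p -> is_gkm_class src tgt alpha q ->
  is_gkm_class src tgt alpha (fun w => p w - q w).
Proof.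
by move=> p_gkm q_gkm e; exact: dvdm_subB (p_gkm e) (q_gkm e).
Qed.

Lemma out_labels_ndvd w : {in enum [set e | src e == w] &,
  forall e e', e != e' -> ~ dvdm (alpha e) (alpha e')}.
Proof.
move=> e e'; rewrite !mem_enum !inE => /eqP src_e /eqP src_e' e_neq_e' e_dvd.
have [e_neq0 e_lin] := alpha_weight e; have [e'_neq0 e'_lin] := alpha_weight e'.
have [k e'E] := dvdm_linear_scale e_neq0 e_lin e'_neq0 e'_lin e_dvd.
have [] := alpha_indep (a := - k) (b := 1) e_neq_e' (etrans src_e (esym src_e')).
  by rewrite scaleNr scale1r -e'E addNr.
by move=> _ /eqP; rewrite oner_eq0.
Qed.

Lemma out_prod_dhomog w :
  \prod_(e | src e == w) alpha e != 0 /\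
  \prod_(e | src e == w) alpha e \is (outdeg src w).-homog.
Proof.
have -> : \prod_(e | src e == w) alpha e = \prod_(e <- enum [set e | src e == w]) alpha e.
  by rewrite big_enum; apply: eq_bigl => e; rewrite inE.
by rewrite /outdeg cardE; apply: big_prod_linear_dhomog.
Qed.

Lemma gkm_class_eq0_at r w d : is_gkm_class src tgt alpha r ->
  (forall e, src e = w -> r (tgt e) = 0) -> r w \is d.-homog ->
  (d < outdeg src w)%N -> r w = 0.
Proof.
move=> r_gkm r_tgt r_homog; apply: contraTeq => r_neq0; rewrite -leqNgt /outdeg cardE.
apply: (size_le_dhomog_dvdm alpha_weight (enum_uniq _) (@out_labels_ndvd w) _ r_neq0 r_homog).
move=> e; rewrite mem_enum inE => /eqP src_e.
by have [c rE] := r_gkm e; exists c; rewrite -rE src_e r_tgt // subr0.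
Qed.

Lemma gkm_class_eq0 v r : is_gkm_class src tgt alpha r -> r v = 0 ->
  (forall w, r w \is (outdeg src v).-homog) ->
  (forall w, ~~ dreach src tgt w v -> r w = 0) -> forall w, r w = 0.
Proof.
move=> r_gkm r_v r_homog r_supp w.
elim: (outdeg src w).+1 {-2}w (ltnSn (outdeg src w)) => // k IHk {}w w_lt.
have [w_v|] := boolP (dreach src tgt w v); last exact: r_supp.
have [->|w_neq_v] := eqVneq w v; first exact: r_v.
apply: (gkm_class_eq0_at r_gkm _ (r_homog w)).
  by move=> e src_e; apply: IHk; rewrite -src_e in w_lt; exact: leq_trans (src_tgt_outdeg e) w_lt.
have [e src_e e_v] := dreach_first_edge w_v w_neq_v.
by rewrite -src_e; exact: leq_ltn_trans (dreach_outdeg src_tgt_outdeg e_v) (src_tgt_outdeg e).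
Qed.

End GKMClasses.

Theorem mainTheorem4 (n : nat) (V E : finType) (src tgt : E -> V)
    (alpha : E -> Tpoly n)
    (Hw : weight_labels alpha)
    (Hind : pairwise_indep_out src alpha)
    (Hps : palais_smale src tgt)
    (v : V) (p q : V -> Tpoly n)
    (Hp : knutson_tao_class src tgt alpha v p)
    (Hq : knutson_tao_class src tgt alpha v q) :
  forall w : V, p w = q w.
Proof.
case: Hp => p_gkm p_v p_homog p_supp; case: Hq => q_gkm q_v q_homog q_supp.
have pq_v : p v = q v by rewrite p_v q_v.
have deg_v : tdeg (p v) = outdeg src v.
  have [prod_neq0 prod_homog] := out_prod_dhomog src Hw v.
  by rewrite /tdeg p_v (msize_dhomog prod_neq0 prod_homog).
have class_homog (c : V -> Tpoly n) : (forall w, c w != 0 -> c w \is (tdeg (c v)).-homog) ->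
    c v = p v -> forall w, c w \is (outdeg src v).-homog.
  move=> c_homog c_v w; have [->|/c_homog] := eqVneq (c w) 0; first exact: rpred0.
  by rewrite c_v deg_v.
suff pq0 : forall w, p w - q w = 0 by move=> w; apply/eqP; rewrite -subr_eq0 pq0.
apply: (gkm_class_eq0 Hw Hind Hps (v := v)); first exact: is_gkm_classB.
- by rewrite pq_v subrr.
- by move=> w; apply: rpredB; [apply: class_homog | apply: (class_homog q)].
- by move=> w w_v; rewrite p_supp ?q_supp ?subrr.
Qed.
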